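(* Let $s>0$ and let $|FMSV\rangle$ be the four-mode state $$|FMSV\rangle=\frac{1}{\cosh s}\sum_{n=0}^\infty\sum_{r_1=0}^n\sum_{r_2=0}^n\sqrt{\binom{n}{r_1}}\sqrt{\binom{n}{r_2}}\Big(\tfrac12\tanh s\Big)^n|n-r_1\rangle_1|n-r_2\rangle_2|r_1\rangle_3|r_2\rangle_4,$$ where $|k\rangle_j$ is the $k$-photon Fock state of mode $j$. Let $\{j,j'\}$ be a pair of alternate modes, i.e. $\{j,j'\}=\{1,3\}$ or $\{j,j'\}=\{2,4\}$, and fix an integer $M\ge 0$. For nonnegative integers $m_j,m_{j'}$ with $m_j+m_{j'}=M$, let $|\psi^{sub}_{m_j,m_{j'}}\rangle$ be the normalized photon-subtracted state $a_j^{m_j}a_{j'}^{m_{j'}}|FMSV\rangle/\|a_j^{m_j}a_{j'}^{m_{j'}}|FMSV\rangle\|$ (no photons added to or subtracted from the other two modes), where $a_j$ is the annihilation operator of mode $j$. Then the generalized geometric measure $\mathcal G(|\psi^{sub}_{m_j,m_{j'}}\rangle)$ is independent of the split $(m_j,m_{j'})$, i.e. it depends only on $M$.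
   Context: The annihilation operator acts as $a|k\rangle=\sqrt{k}\,|k-1\rangle$ (so $a^m|k\rangle=\sqrt{k!/(k-m)!}\,|k-m\rangle$ for $k\ge m$ and $0$ otherwise). A four-mode pure state $|\chi\rangle$ is called non-genuinely multimode entangled if there is a bipartition of the modes $\{1,2,3,4\}=\mathcal A\cup\mathcal B$ into two disjoint nonempty sets with $|\chi\rangle=|\chi_{\mathcal A}\rangle\otimes|\chi_{\mathcal B}\rangle$; denote this set by $nG$. The generalized geometric measure (GGM) of a four-mode pure state is $\mathcal G(|\psi\rangle)=1-\sup_{|\chi\rangle\in nG}|\langle\chi|\psi\rangle|^2$. *)

From Stdlib Require Import Reals Lra.
From Stdlib Require Import Arith.Factorial.
From Stdlib Require Binomial.
From Coquelicot Require Import Coquelicot.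
Open Scope R_scope.

(* A four-mode Fock-basis configuration (n1,n2,n3,n4). *)
Definition cfg := (nat * nat * nat * nat)%type.

(* A (pure) four-mode state, given by its Fock-basis amplitudes. *)
Definition state := cfg -> C.

Definition get (j : nat) (n : cfg) : nat :=
  let '(a, b, c, d) := n in
  match j with 1 => a | 2 => b | 3 => c | 4 => d | _ => 0%nat end.

Definition upd (j : nat) (k : nat) (n : cfg) : cfg :=
  let '(a, b, c, d) := n in
  match j with 1 => (k, b, c, d) | 2 => (a, k, c, d) | 3 => (a, b, k, d)
             | 4 => (a, b, c, k) | _ => n end.

Definition boxR (N : nat) (g : cfg -> R) : R :=
  sum_f_R0 (fun a => sum_f_R0 (fun b => sum_f_R0 (fun c => sum_f_R0
    (fun d => g (a, b, c, d)) N) N) N) N.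

Definition norm2 (psi : state) : Rbar :=
  Lim_seq (fun N => boxR N (fun n => (Cmod (psi n)) ^ 2)).

Definition normalized (psi : state) : Prop := norm2 psi = Finite 1.

(* Inner product <chi|psi> = sum_n conj(chi n) * psi n (limit of box sums;
   absolutely convergent for square-summable chi, psi). *)
Definition inner (chi psi : state) : C :=
  (real (Lim_seq (fun N => boxR N (fun n => Re (Cmult (Cconj (chi n)) (psi n))))),
   real (Lim_seq (fun N => boxR N (fun n => Im (Cmult (Cconj (chi n)) (psi n)))))).

(* Bipartition {1,2,3,4} = A ∪ B given by a mask: mode j is in A iff mask j. *)
Definition mask_ok (mask : nat -> bool) : Prop :=
  (exists j, (1 <= j <= 4)%nat /\ mask j = true) /\
  (exists j, (1 <= j <= 4)%nat /\ mask j = false).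

Definition depends_only (mask : nat -> bool) (b : bool) (f : cfg -> C) : Prop :=
  forall n m : cfg,
    (forall j, (1 <= j <= 4)%nat -> mask j = b -> get j n = get j m) ->
    f n = f m.

(* chi = chi_A ⊗ chi_B for some bipartition (A,B). *)
Definition product_across (chi : state) : Prop :=
  exists mask : nat -> bool, mask_ok mask /\
  exists fA fB : cfg -> C,
    depends_only mask true fA /\ depends_only mask false fB /\
    forall n, chi n = Cmult (fA n) (fB n).

Definition nG (chi : state) : Prop := normalized chi /\ product_across chi.

Definition overlap (chi psi : state) : R := (Cmod (inner chi psi)) ^ 2.

Definition GGM (psi : state) : R :=
  1 - real (Lub_Rbar (fun x => exists chi, nG chi /\ x = overlap chi psi)).

(* a_j^m acting on a state: (a^m psi)(.., k, ..) = sqrt((k+m)!/k!) psi(.., k+m, ..),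
   from a^m |k> = sqrt(k!/(k-m)!) |k-m>. *)
Definition annihil_pow (j m : nat) (psi : state) : state :=
  fun n => Cmult (RtoC (sqrt (INR (fact (get j n + m)) / INR (fact (get j n)))))
                 (psi (upd j (get j n + m)%nat n)).

Definition normalize (phi : state) : state :=
  fun n => Cmult (RtoC (/ sqrt (real (norm2 phi)))) (phi n).

(* The four-mode squeezed vacuum |FMSV>. Amplitude of |a>|b>|c>|d> is nonzero
   only if a + c = b + d = n, with r1 = c, r2 = d. *)
Definition FMSV (s : R) : state :=
  fun '(a, b, c, d) =>
    if Nat.eqb (a + c) (b + d) then
      RtoC (/ cosh s * sqrt (Binomial.C (a + c) c) * sqrt (Binomial.C (a + c) d)
            * (tanh s / 2) ^ (a + c))
    else RtoC 0.

Definition alternate_pair (j j' : nat) : Prop :=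
  (j = 1%nat /\ j' = 3%nat) \/ (j = 2%nat /\ j' = 4%nat).

Definition psi_sub (s : R) (j j' mj mj' : nat) : state :=
  normalize (annihil_pow j mj (annihil_pow j' mj' (FMSV s))).

From Stdlib Require Import Reals Lra Lia FunctionalExtensionality.
From Stdlib Require Import Arith.Factorial.
From Coquelicot Require Import Coquelicot.
Open Scope R_scope.

(* The theorem already holds before normalization.  Removing x photons from a
   mode holding a and y photons from its alternate mode holding c multiplies
   the FMSV amplitude by sqrt((a+x)!/a!) sqrt((c+y)!/c!), and this factor
   cancels against the binomial weight sqrt(C(N, c+y)), N = a+x+c+y, leaving
   sqrt(N!/(a! c!)).  Since N = a + c + x + y, every amplitude of
   a_j^x a_j'^y |FMSV> depends on (x, y) only through x + y. *)

Lemma sqrt_fact_ratio_binomial a c x y N : N = (a + x + (c + y))%nat ->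
  sqrt (INR (fact (a + x)) / INR (fact a)) * sqrt (INR (fact (c + y)) / INR (fact c))
  * sqrt (Binomial.C N (c + y))
  = sqrt (INR (fact N) / (INR (fact a) * INR (fact c))).
Proof.
  intros HN. unfold Binomial.C.
  replace (N - (c + y))%nat with (a + x)%nat by lia.
  pose proof (INR_fact_lt_0 a). pose proof (INR_fact_lt_0 c).
  pose proof (INR_fact_lt_0 (a + x)). pose proof (INR_fact_lt_0 (c + y)).
  pose proof (INR_fact_lt_0 N).
  rewrite <- !sqrt_mult.
  - f_equal. field. lra.
  all: apply Rlt_le; unfold Rdiv;
       repeat (apply Rmult_lt_0_compat || apply Rinv_0_lt_compat); assumption.
Qed.

Lemma annihil_pow_13_FMSV s m1 m3 a b c d :
  annihil_pow 1 m1 (annihil_pow 3 m3 (FMSV s)) (a, b, c, d) =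
  if Nat.eqb (a + c + (m1 + m3)) (b + d) then
    RtoC (/ cosh s * sqrt (INR (fact (a + c + (m1 + m3))) / (INR (fact a) * INR (fact c)))
          * sqrt (Binomial.C (a + c + (m1 + m3)) d) * (tanh s / 2) ^ (a + c + (m1 + m3)))
  else RtoC 0.
Proof.
  unfold annihil_pow; simpl.
  replace (a + m1 + (c + m3))%nat with (a + c + (m1 + m3))%nat by lia.
  destruct Nat.eqb; rewrite <- !RtoC_mult; f_equal.
  - rewrite <- (sqrt_fact_ratio_binomial a c m1 m3) by lia. ring.
  - ring.
Qed.

Lemma annihil_pow_24_FMSV s m2 m4 a b c d :
  annihil_pow 2 m2 (annihil_pow 4 m4 (FMSV s)) (a, b, c, d) =
  if Nat.eqb (a + c) (b + d + (m2 + m4)) then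
    RtoC (/ cosh s * sqrt (Binomial.C (a + c) c)
          * sqrt (INR (fact (a + c)) / (INR (fact b) * INR (fact d))) * (tanh s / 2) ^ (a + c))
  else RtoC 0.
Proof.
  unfold annihil_pow; simpl.
  replace (b + m2 + (d + m4))%nat with (b + d + (m2 + m4))%nat by lia.
  destruct (Nat.eqb (a + c) (b + d + (m2 + m4))) eqn:E;
    rewrite <- !RtoC_mult; f_equal.
  - apply Nat.eqb_eq in E.
    rewrite <- (sqrt_fact_ratio_binomial b d m2 m4 (a + c)) by lia. ring.
  - ring.
Qed.

Lemma annihil_pow_alternate_FMSV s j j' mj mj' nj nj' :
  alternate_pair j j' -> (mj + mj' = nj + nj')%nat ->
  annihil_pow j mj (annihil_pow j' mj' (FMSV s)) =
  annihil_pow j nj (annihil_pow j' nj' (FMSV s)).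
Proof.
  intros [[-> ->] | [-> ->]] Hsum; apply functional_extensionality;
    intros [[[a b] c] d].
  - rewrite !annihil_pow_13_FMSV, Hsum. reflexivity.
  - rewrite !annihil_pow_24_FMSV, Hsum. reflexivity.
Qed.

Theorem theorem2 (s : R) (hs : 0 < s) (j j' : nat) (hjj : alternate_pair j j')
  (M mj mj' nj nj' : nat) (hm : (mj + mj')%nat = M) (hn : (nj + nj')%nat = M) :
  GGM (psi_sub s j j' mj mj') = GGM (psi_sub s j j' nj nj').
Proof.
  unfold psi_sub.
  rewrite (annihil_pow_alternate_FMSV s j j' mj mj' nj nj' hjj) by lia.
  reflexivity.
Qed.
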